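(* Let $\mathbb{D}$ be a discrete polymatroid on ground set $\{1,\dots,r\}$ with rank function $\rho$ and $\rho(\{1,\dots,r\})=k$, and let $\mathcal{I}_{\mathbb{D}}(Z,\mathcal{R})$ be the generalized index coding problem constructed from $\mathbb{D}$ (defined in the context). If a perfect linear index coding solution of dimension $n$ over $\mathbb{F}_2$ exists for $\mathcal{I}_{\mathbb{D}}(Z,\mathcal{R})$, then the discrete polymatroid $n\mathbb{D}$ is representable over $\mathbb{F}_2$.
   Context: A discrete polymatroid on $\{1,\dots,r\}$ with rank function $\rho:2^{\{1,\dots,r\}}\to\mathbb{Z}_{\ge0}$ (monotone, submodular, $\rho(\emptyset)=0$) is the set $\mathbb{D}=\{u\in\mathbb{Z}_{\ge0}^r: \sum_{i\in A}u_i\le\rho(A)\ \forall A\subseteq\{1,\dots,r\}\}$. For $u,v\in\mathbb{Z}_{\ge0}^r$, $u\le v$ means componentwise and $u<v$ means $u\le v$, $u\ne v$; $(u)_{>0}$ is the set of indices of nonzero components. A basis vector of $\mathbb{D}$ is $u\in\mathbb{D}$ with no $v\in\mathbb{D}$, $u<v$; $\mathcal{B}(\mathbb{D})$ is the set of basis vectors. An excluded vector is $u\in\mathbb{Z}_{\ge0}^r$ with $u_i\le\rho(\{i\})$ for all $i$ and $u\notin\mathbb{D}$; it is minimal if no excluded $v$ satisfies $v<u$; $\mathcal{C}(\mathbb{D})$ is the set of minimal excluded vectors. $n\mathbb{D}$ is the discrete polymatroid on $\{1,\dots,r\}$ with rank function $n\rho$. It is representable over $\mathbb{F}_2$ if there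 are subspaces $V_1,\dots,V_r$ of an $\mathbb{F}_2$-vector space with $\dim(\sum_{i\in S}V_i)=n\rho(S)$ for all $S$. Construction of $\mathcal{I}_{\mathbb{D}}(Z,\mathcal{R})$: messages $Z=X\cup Y$ with $X=\{x_1,\dots,x_k\}$ and $Y=\{y_i^j: i\in\{1,\dots,r\}, j\in\{1,\dots,\rho(\{i\})\}\}$; with dimension $n$ each message lies in $\mathbb{F}_2^n$. Let $\zeta_i=\{y_i^1,\dots,y_i^{\rho(\{i\})}\}$. A receiver is a pair (demanded message, Has-set); a Has-set that is a set of messages means the receiver knows those messages, and a Has-set that is a sum $\sum_{y\in\Gamma}y$ means the receiver knows only the vector $\sum_{y\in\Gamma}y\in\mathbb{F}_2^n$. $\mathcal{R}=R_1\cup R_2\cup R_3$ where: $R_1=\bigcup_{b\in\mathcal{B}(\mathbb{D})}S_1(b)$ with $S_1(b)=\{(x_j,\bigcup_{l\in(b)_{>0}}\eta_l): j\in\{1,\dots,k\},\ \eta_l\subseteq\zeta_l,\ |\eta_l|=b_l\}$; $R_2=\bigcup_{c\in\mathcal{C}(\mathbb{D})}\bigcup_{j\in(c)_{>0}}\bigcup_{p\in\{1,\dots,\rho(\{j\})\}}S_2(c,j,p)$ with $S_2(c,j,p)=\{(y_j^p,\sum_{y\in\Gamma_1\cup\Gamma_2}y): \Gamma_1=\bigcup_{l\in(c)_{>0}\setminus\{j\}}\eta_l,\ \eta_l\subseteq\zeta_l,\ |\eta_l|=c_l,\ \Gamma_2\subseteq\zeta_j\setminus\{y_j^p\},\ |\Gamma_2|=c_j-1\}$;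 $R_3=\{(y_i^j,X): i\in\{1,\dots,r\}, j\in\{1,\dots,\rho(\{i\})\}\}$. An index code of length $l$ and dimension $n$ over $\mathbb{F}_2$ is a map $f$ from the concatenated messages in $\mathbb{F}_2^{n|Z|}$ to $\mathbb{F}_2^l$ such that each receiver can compute its demanded message from its Has-set and $f$ of the messages; it is linear if $f$ is linear. With $\mu$ the maximum number of receivers having the same Has-set, a solution is perfect if $l/n=\mu$. *)

From HB Require Import structures.
From mathcomp Require Import all_boot all_order all_algebra.
From Stdlib Require Import ClassicalEpsilon.
Set Implicit Arguments. Unset Strict Implicit. Unset Printing Implicit Defensive.
Import GRing.Theory.

Definition pb (P : Prop) : bool :=
  if excluded_middle_informative P then true else false.

Section Polymatroid.
Variables (r : nat) (rho : {set 'I_r} -> nat).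

Definition vec := {ffun 'I_r -> nat}.

Definition vle (u v : vec) : Prop := forall i, u i <= v i.
Definition vlt (u v : vec) : Prop := vle u v /\ u <> v.

Definition inD (u : vec) : Prop :=
  forall A : {set 'I_r}, \sum_(i in A) u i <= rho A.

Definition basis_vec (u : vec) : Prop :=
  inD u /\ ~ (exists v, inD v /\ vlt u v).

Definition excluded (u : vec) : Prop :=
  (forall i, u i <= rho [set i]) /\ ~ inD u.
Definition min_excluded (u : vec) : Prop :=
  excluded u /\ ~ (exists v, excluded v /\ vlt v u).

Definition kk := rho [set: 'I_r].

(* messages: X = {x_1..x_k} (inl), Y = {y_i^j} (inr (i; j)), j 0-based *)
Definition Yidx := {i : 'I_r & 'I_(rho [set i])}.
Definition Msg := ('I_kk + Yidx)%type.

Definition xmsg (j : 'I_kk) : Msg := inl j.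
Definition ymsg (i : 'I_r) (j : 'I_(rho [set i])) : Msg := inr (existT _ i j).

Definition Xset : {set Msg} := [set m : Msg | is_inl m].
Definition zeta (i : 'I_r) : {set Msg} := [set ymsg j | j : 'I_(rho [set i])].

(* Has-sets: inl S = the receiver knows the messages in S;
   inr S = the receiver knows only the sum of the messages in S.
   A sum over a single message is the same information as knowing that
   message, so it is identified with the corresponding set Has-set. *)
Definition HasSet := ({set Msg} + {set Msg})%type.
Definition HKnow (S : {set Msg}) : HasSet := inl S.
Definition HSum (S : {set Msg}) : HasSet :=
  if #|S| == 1 then inl S else inr S.

Definition support (u : vec) : {set 'I_r} := [set i | 0 < u i].

Definition inR1 (d : Msg) (H : HasSet) : Prop :=
  exists (b : vec) (j : 'I_kk) (eta : 'I_r -> {set Msg}),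
    basis_vec b /\ d = xmsg j /\
    (forall l, l \in support b -> eta l \subset zeta l /\ #|eta l| = b l) /\
    H = HKnow (\bigcup_(l in support b) eta l).

Definition inR2 (d : Msg) (H : HasSet) : Prop :=
  exists (c : vec) (j : 'I_r) (p : 'I_(rho [set j]))
         (eta : 'I_r -> {set Msg}) (G2 : {set Msg}),
    min_excluded c /\ j \in support c /\ d = ymsg p /\
    (forall l, l \in support c :\ j -> eta l \subset zeta l /\ #|eta l| = c l) /\
    G2 \subset zeta j :\ ymsg p /\ #|G2| = (c j).-1 /\
    H = HSum ((\bigcup_(l in support c :\ j) eta l) :|: G2).

Definition inR3 (d : Msg) (H : HasSet) : Prop :=
  exists (i : 'I_r) (j : 'I_(rho [set i])), d = ymsg j /\ H = HKnow Xset.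

Definition receiver (d : Msg) (H : HasSet) : Prop :=
  inR1 d H \/ inR2 d H \/ inR3 d H.

Definition mu : nat :=
  \max_(H : HasSet) #|[set d : Msg | pb (receiver d H)]|.

Definition info n (H : HasSet) (z : {ffun Msg -> 'rV['F_2]_n})
  : {ffun Msg -> 'rV['F_2]_n} :=
  match H with
  | inl T => [ffun m => if m \in T then z m else 0%R]
  | inr T => [ffun _ => (\sum_(m in T) z m)%R]
  end.

Definition lin_encode n l (E : Msg -> 'M['F_2]_(n, l))
  (z : {ffun Msg -> 'rV['F_2]_n}) : 'rV['F_2]_l :=
  (\sum_(m : Msg) z m *m E m)%R.

Definition linear_index_code n l (E : Msg -> 'M['F_2]_(n, l)) : Prop :=
  forall d H, receiver d H ->
    exists g : {ffun Msg -> 'rV['F_2]_n} -> 'rV['F_2]_l -> 'rV['F_2]_n,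
      forall z, g (info H z) (lin_encode E z) = z d.

(* perfect: l / n = mu, i.e. l = mu * n (n > 0) *)
Definition perfect_linear_solution n : Prop :=
  exists l (E : Msg -> 'M['F_2]_(n, l)),
    linear_index_code E /\ l = mu * n.

Definition representable_F2 n : Prop :=
  exists (m : nat) (V : 'I_r -> 'M['F_2]_m),
    forall S : {set 'I_r}, \rank (\sum_(i in S) V i)%MS = n * rho S.

End Polymatroid.

(** Flatten the messages into one row vector over ['F_2] and let [K] be the
    kernel of the linear encoder; as [l = mu n <= |Y| n], [dim K >= k n].  A
    kernel vector looks like [0] to every receiver, so if it vanishes on a
    receiver's side information it vanishes on the demanded message.  Via the
    [R_3] and [R_1] receivers, [K] restricted to the coordinates of the
    messages [y_l^1 .. y_l^(b_l)] of a basis vector [b] is injective, hence,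
    by counting, onto; so is its restriction to the messages of any [u <= b].
    Given [S], take [u] in [D] supported on [S] with [u(S) = rho(S)]: via the
    [R_2] receivers of the minimal excluded vectors below [u + e_i], a kernel
    vector vanishing on the messages of [u] vanishes on all of [zeta_S].  Hence
    [K] restricted to the coordinates of [zeta_S] has rank [n rho(S)], and the
    restrictions [V_i] of [K] to the coordinates of [zeta_i] represent [n D]. *)

From Pilot Require Import Defs.
From mathcomp Require Import all_boot all_order all_algebra zify.
From Stdlib Require Import Classical ClassicalEpsilon.
Set Implicit Arguments. Unset Strict Implicit. Unset Printing Implicit Defensive.

Lemma pbP (P : Prop) : reflect P (pb P).
Proof. by rewrite /pb; case: excluded_middle_informative => h; constructor. Qed.

Section BigSetUI.
Variables (R : Type) (idx : R) (op : Monoid.com_law idx) (T : finType) (F : T -> R).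

Lemma big_setUI (A B : {set T}) :
  op (\big[op/idx]_(i in A :|: B) F i) (\big[op/idx]_(i in A :&: B) F i) =
  op (\big[op/idx]_(i in A) F i) (\big[op/idx]_(i in B) F i).
Proof.
rewrite (@big_setID _ _ _ _ (A :|: B) A) (@big_setID _ _ _ _ B A).
rewrite setUK setDUl setDv set0U [B :&: A]setIC.
by rewrite Monoid.mulmAC Monoid.mulmA.
Qed.

End BigSetUI.

Section Polymatroid.
Variables (r : nat) (rho : {set 'I_r} -> nat).
Hypothesis rho0 : rho set0 = 0.
Hypothesis rho_mono : forall A B : {set 'I_r}, A \subset B -> rho A <= rho B.
Hypothesis rho_submod :
  forall A B : {set 'I_r}, rho (A :|: B) + rho (A :&: B) <= rho A + rho B.

Implicit Types (u v : vec r) (A B S : {set 'I_r}).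

Lemma sum_support u : \sum_(i in Defs.support u) u i = \sum_i u i.
Proof.
rewrite [RHS](bigID [in Defs.support u]) /= [X in _ = _ + X]big1 ?addn0 // => i.
by rewrite inE lt0n negbK => /eqP.
Qed.

Definition vincr u j : vec r := [ffun i => u i + (i == j)].

Lemma sum_vincr u j A : \sum_(i in A) vincr u j i = \sum_(i in A) u i + (j \in A).
Proof.
rewrite (eq_bigr (fun i => u i + (i == j))) => [|i _]; last by rewrite ffunE.
rewrite big_split /=; congr (_ + _); have [jA | /negbTE jA] := boolP (j \in A).
  by rewrite (bigD1 j jA) eqxx big1 // => i /andP [_ /negbTE ->].
by rewrite big1 // => i iA; case: eqP iA => // ->; rewrite jA.
Qed.

Definition tight u A := \sum_(i in A) u i == rho A.

Lemma tight_set0 u : tight u set0.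
Proof. by rewrite /tight big_set0 rho0. Qed.

Lemma tight_setU u A B : inD rho u -> tight u A -> tight u B -> tight u (A :|: B).
Proof.
move=> Du /eqP tA /eqP tB; rewrite /tight eqn_leq Du /=.
rewrite -(leq_add2r (rho (A :&: B))) (leq_trans (rho_submod A B)) //.
by rewrite -tA -tB -(big_setUI addn) leq_add2l Du.
Qed.

Definition max_tight u := \bigcup_(A | tight u A) A.

Lemma tight_max_tight u : inD rho u -> tight u (max_tight u).
Proof.
move=> Du; apply: (big_ind (tight u)) => //; first exact: tight_set0.
by move=> A B; exact: tight_setU.
Qed.

(* The constraint violated by [vincr u j] passes through [j] and is tight at [u]. *)
Lemma notin_vincr_max_tight u j : inD rho u -> ~ inD rho (vincr u j) -> j \in max_tight u.
Proof.
move=> Du nD; apply: NNPP => /negP jN; apply: nD => A; rewrite sum_vincr.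
case: (boolP (j \in A)) => jA; last by rewrite addn0; exact: Du.
rewrite addn1 ltn_neqAle Du andbT; apply: contraNN jN => tA.
by apply/bigcupP; exists A.
Qed.

Lemma vlt_sum u v : vlt u v -> \sum_i u i < \sum_i v i.
Proof.
move=> [uv neq_uv]; have [i lt_i] : exists i, u i < v i.
  apply: NNPP => no_lt; apply: neq_uv; apply/ffunP => i; apply/eqP.
  by rewrite eqn_leq uv leqNgt; apply/negP => lt; apply: no_lt; exists i.
rewrite (bigD1 i) // [X in _ < X](bigD1 i) //= -addSn.
by apply: leq_add => //; apply: leq_sum => j _; exact: uv.
Qed.

Lemma vlt_vincr u j : vlt u (vincr u j).
Proof.
split=> [i | /ffunP /(_ j) /eqP]; first by rewrite ffunE leq_addr.
by rewrite ffunE eqxx addn1 eqn_leq ltnn andbF.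
Qed.

Lemma inD_le1 u i : inD rho u -> u i <= rho [set i].
Proof. by move=> /(_ [set i]); rewrite big_set1. Qed.

Lemma inD_sum u : inD rho u -> \sum_i u i <= kk rho.
Proof. by move=> /(_ setT); under eq_bigl => i do rewrite in_setT. Qed.

Lemma inD_vle u v : vle u v -> inD rho v -> inD rho u.
Proof. by move=> uv Dv A; apply: leq_trans (Dv A); apply: leq_sum => i _; exact: uv. Qed.

(* Maximise the coordinate sum, which is bounded on the polymatroid. *)
Lemma exists_maximal (P : vec r -> Prop) u : P u -> (forall v, P v -> inD rho v) ->
  exists b, [/\ P b, vle u b & ~ exists v, P v /\ vlt b v].
Proof.
move=> Pu PD; pose Q k := pb (exists v, [/\ P v, vle u v & \sum_i v i = k]).
have exQ : exists k, Q k.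
  by exists (\sum_i u i); apply/pbP; exists u; split=> // i.
have ubQ k : Q k -> k <= kk rho by move=> /pbP [v [Pv _ <-]]; exact/inD_sum/PD.
case: (ex_maxnP exQ ubQ) => _ /pbP [b [Pb ub <-]] maxb.
exists b; split=> // [[v [Pv bv]]].
have /maxb : Q (\sum_i v i).
  by apply/pbP; exists v; split=> // i; apply: leq_trans (ub i) (bv.1 i).
by rewrite leqNgt vlt_sum.
Qed.

(* Minimise the coordinate sum among the excluded vectors below [u]. *)
Lemma exists_min_excluded u : excluded rho u -> exists c, min_excluded rho c /\ vle c u.
Proof.
move=> Eu; pose Q k := pb (exists c, [/\ excluded rho c, vle c u & \sum_i c i = k]).
have exQ : exists k, Q k.
  by exists (\sum_i u i); apply/pbP; exists u; split=> // i.
case: (ex_minnP exQ) => _ /pbP [c [Ec cu <-]] minc.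
exists c; split=> //; split=> // [[v [Ev vc]]].
have /minc : Q (\sum_i v i).
  by apply/pbP; exists v; split=> // i; apply: leq_trans (vc.1 i) (cu i).
by rewrite leqNgt vlt_sum.
Qed.

Lemma basis_vec_sum b : basis_vec rho b -> \sum_i b i = kk rho.
Proof.
move=> [Db max_b]; have Tb : max_tight b = setT.
  apply/setP => j; rewrite inE; apply: notin_vincr_max_tight => // Dj.
  by apply: max_b; exists (vincr b j); split; last exact: vlt_vincr.
have /eqP := tight_max_tight Db; rewrite Tb /kk => <-.
by apply: eq_bigl => i; rewrite in_setT.
Qed.

Lemma exists_tight_vec S :
  exists u, [/\ inD rho u, forall i, i \notin S -> u i = 0 & \sum_(i in S) u i = rho S].
Proof.
pose P v := inD rho v /\ forall i, i \notin S -> v i = 0.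
have P0 : P [ffun => 0].
  by split=> [A | i _]; rewrite ?big1 // => *; rewrite ffunE.
have [b [[Db bS] _ max_b]] := exists_maximal P0 (fun v Pv => Pv.1).
exists b; split=> //; set T := max_tight b.
have ST : S \subset T.
  apply/subsetP => j jS; apply: notin_vincr_max_tight => // Dj.
  apply: max_b; exists (vincr b j); split; last exact: vlt_vincr.
  by split=> // i iS; rewrite ffunE bS //; case: eqP iS => // ->; rewrite jS.
have sum_T : \sum_(i in T) b i = \sum_(i in S) b i.
  rewrite (@big_setID _ _ _ _ T S) (setIidPr ST) /= [X in _ + X]big1 ?addn0 //.
  by move=> i /setDP [_ /bS].
apply/eqP; rewrite eqn_leq Db -sum_T (eqP (tight_max_tight Db)).
exact: rho_mono.
Qed.

Lemma exists_min_excluded_vincr u S i :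
  inD rho u -> i \in S -> \sum_(k in S) u k = rho S -> u i < rho [set i] ->
  exists c, [/\ min_excluded rho c, c i = (u i).+1 & forall k, k != i -> c k <= u k].
Proof.
move=> Du iS tS lt_i.
have Ev : excluded rho (vincr u i).
  split=> [k | /(_ S)]; last by rewrite sum_vincr tS iS addn1 ltnn.
  by rewrite ffunE; case: eqP => [-> | _]; rewrite ?addn1 // addn0 inD_le1.
have [c [Mc cv]] := exists_min_excluded Ev.
have ck k : k != i -> c k <= u k by move=> ki; have := cv k; rewrite ffunE (negbTE ki) addn0.
exists c; split=> //; apply/eqP; rewrite eqn_leq.
have := cv i; rewrite ffunE eqxx addn1 => -> /=; rewrite ltnNge; apply/negP => ciu.
by apply: Mc.1.2; apply: inD_vle Du => k; case: (eqVneq k i) => [-> // | /ck].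
Qed.

End Polymatroid.

Lemma card_bigcup_disjoint (I T : finType) (P : {set I}) (A : I -> {set T}) :
  {in P &, forall i j, i != j -> [disjoint A i & A j]} ->
  #|\bigcup_(i in P) A i| = \sum_(i in P) #|A i|.
Proof.
elim: {P}_.+1 {-2}P (ltnSn #|P|) => // k IH P ltP disA.
have [-> | [i iP]] := set_0Vmem P; first by rewrite !big_set0 cards0.
have ltPi : #|P :\ i| < k by rewrite -ltnS (leq_trans _ ltP) // (cardsD1 i P) iP.
have disAi : [disjoint A i & \bigcup_(j in P :\ i) A j].
  by apply: bigcup_disjoint => j /setD1P [ji jP]; apply: disA; rewrite // eq_sym.
rewrite (big_setD1 i iP) (big_setD1 i iP) /= cardsU (disjoint_setI0 disAi) cards0 subn0.
by rewrite IH // => j1 j2 /setD1P [_ ?] /setD1P [_ ?]; apply: disA.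
Qed.

Section Messages.
Variables (r : nat) (rho : {set 'I_r} -> nat).
Implicit Types (u v : vec r) (S : {set 'I_r}).

Definition Yset : {set Msg rho} := ~: Xset rho.

Lemma ymsg_eq i j (p : 'I_(rho [set i])) (q : 'I_(rho [set j])) :
  ymsg p = ymsg q -> i = j /\ p = q :> nat.
Proof.
by move/(congr1 (fun m : Msg rho => if m is inr y then (tag y, tagged y : nat) else (i, 0))) => [].
Qed.

Lemma ymsg_inj i : injective (@ymsg r rho i).
Proof. by move=> p q /ymsg_eq [_ /val_inj]. Qed.

Lemma ymsg_zeta i (p : 'I_(rho [set i])) : ymsg p \in zeta rho i.
Proof. exact: imset_f. Qed.

Lemma zetaP i m : reflect (exists p : 'I_(rho [set i]), m = ymsg p) (m \in zeta rho i).
Proof. by apply: (iffP imsetP) => [[p _ ->] | [p ->]]; exists p. Qed.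

Lemma zeta_disjoint i j : i != j -> [disjoint zeta rho i & zeta rho j].
Proof.
move=> ij; rewrite -setI_eq0; apply/eqP/setP => m; rewrite !inE.
by apply/andP => -[/zetaP [p ->] /zetaP [q /ymsg_eq [eij _]]]; rewrite eij eqxx in ij.
Qed.

Lemma zeta_sub_Yset i : zeta rho i \subset Yset.
Proof. by apply/subsetP => m /zetaP [p ->]; rewrite !inE. Qed.

Lemma card_bigcup_zeta (P : {set 'I_r}) (A : 'I_r -> {set Msg rho}) :
  {in P, forall l, A l \subset zeta rho l} ->
  #|\bigcup_(l in P) A l| = \sum_(l in P) #|A l|.
Proof.
move=> Azeta; apply: card_bigcup_disjoint => i j iP jP ij.
by apply: disjointWl (Azeta i iP) _; apply: disjointWr (Azeta j jP) _; exact: zeta_disjoint.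
Qed.

Definition zeta_prefix i a : {set Msg rho} :=
  [set ymsg p | p in [set p : 'I_(rho [set i]) | p < a]].

Lemma zeta_prefix_sub i a : zeta_prefix i a \subset zeta rho i.
Proof. by apply/subsetP => m /imsetP [p _ ->]; exact: ymsg_zeta. Qed.

Lemma mem_zeta_prefix i (p : 'I_(rho [set i])) a : (ymsg p \in zeta_prefix i a) = (p < a).
Proof. by rewrite mem_imset ?inE //; exact: ymsg_inj. Qed.

Lemma card_zeta_prefix i a : a <= rho [set i] -> #|zeta_prefix i a| = a.
Proof.
move=> le_a; rewrite card_imset; last exact: ymsg_inj.
have -> : [set p : 'I_(rho [set i]) | p < a] = [set widen_ord le_a q | q : 'I_a].
  apply/setP => p; rewrite inE; apply/idP/imsetP => [pa | [q _ ->]]; last exact: (ltn_ord q).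
  by exists (Ordinal pa) => //; apply: val_inj.
by rewrite card_imset ?card_ord // => q1 q2 /(congr1 val) /= /ord_inj.
Qed.

Definition ymsgs u : {set Msg rho} := \bigcup_(l in Defs.support u) zeta_prefix l (u l).

Lemma mem_ymsgs u i (p : 'I_(rho [set i])) : (ymsg p \in ymsgs u) = (p < u i).
Proof.
apply/bigcupP/idP => [[l _] | pu].
  by case/imsetP=> q; rewrite inE => ql /ymsg_eq [eil ->]; subst l.
by exists i; rewrite ?mem_zeta_prefix // inE (leq_ltn_trans (leq0n p) pu).
Qed.

Lemma ymsgsP u m :
  reflect (exists i (p : 'I_(rho [set i])), m = ymsg p /\ p < u i) (m \in ymsgs u).
Proof.
apply: (iffP idP) => [| [i [p [-> pu]]]]; last by rewrite mem_ymsgs.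
by case/bigcupP=> l _ /imsetP [p]; rewrite inE => pu ->; exists l, p.
Qed.

Lemma card_ymsgs u : (forall i, u i <= rho [set i]) -> #|ymsgs u| = \sum_i u i.
Proof.
move=> le_u; rewrite card_bigcup_zeta => [|l _]; last exact: zeta_prefix_sub.
by rewrite -sum_support; apply: eq_bigr => l _; exact: card_zeta_prefix.
Qed.

Lemma ymsgs_subset u v : vle u v -> ymsgs u \subset ymsgs v.
Proof.
move=> uv; apply/subsetP => _ /ymsgsP [i [p [-> pu]]].
by rewrite mem_ymsgs (leq_trans pu (uv i)).
Qed.

Lemma zeta_prefix_ymsgs u i a : a <= u i -> zeta_prefix i a \subset ymsgs u.
Proof.
move=> au; apply/subsetP => m /imsetP [p]; rewrite inE => pa ->.
by rewrite mem_ymsgs (leq_trans pa au).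
Qed.

Definition zetas S : {set Msg rho} := \bigcup_(i in S) zeta rho i.

Lemma ymsgs_zetas u S : (forall i, i \notin S -> u i = 0) -> ymsgs u \subset zetas S.
Proof.
move=> uS; apply/subsetP => _ /ymsgsP [i [p [-> pu]]]; apply/bigcupP; exists i.
  by apply: contraLR pu => /uS ->.
exact: ymsg_zeta.
Qed.

End Messages.

Section Receivers.
Variables (r : nat) (rho : {set 'I_r} -> nat).

Definition hasset_msgs (H : HasSet rho) : {set Msg rho} :=
  match H with inl T | inr T => T end.

Lemma hasset_msgs_HSum T : hasset_msgs (HSum T) = T.
Proof. by rewrite /HSum; case: ifP. Qed.

Lemma inR1_ymsgs b j : basis_vec rho b -> inR1 (xmsg j) (HKnow (ymsgs rho b)).
Proof.
move=> bb; exists b, j, (fun l => zeta_prefix rho l (b l)); do 3 split => //.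
by move=> l _; split; [exact: zeta_prefix_sub | exact/card_zeta_prefix/inD_le1/bb.1].
Qed.

Lemma inR2_zeta_prefix c i a (p : 'I_(rho [set i])) :
  min_excluded rho c -> c i = a.+1 -> a <= p ->
  inR2 (ymsg p)
    (HSum ((\bigcup_(l in Defs.support c :\ i) zeta_prefix rho l (c l)) :|: zeta_prefix rho i a)).
Proof.
move=> Mc ci ap; exists c, i, p, (fun l => zeta_prefix rho l (c l)), (zeta_prefix rho i a).
have le_c k : c k <= rho [set k] := Mc.1.1 k.
do 2 split => //; first by rewrite inE ci.
split=> //; split; first by move=> l _; split; [exact: zeta_prefix_sub | exact: card_zeta_prefix].
split; last by rewrite ci card_zeta_prefix // ltnW // -ci le_c.
apply/subsetP => m /imsetP [q]; rewrite inE => qa ->; rewrite in_setD1 ymsg_zeta andbT.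
by apply: contraTneq qa => /ymsg_inj ->; rewrite -leqNgt.
Qed.

Lemma inR3_Xset i (p : 'I_(rho [set i])) : inR3 (ymsg p) (HKnow (Xset rho)).
Proof. by exists i, p. Qed.

End Receivers.

Section HasSetCounting.
Variables (r : nat) (rho : {set 'I_r} -> nat).
Hypothesis rho0 : rho set0 = 0.
Hypothesis rho_submod :
  forall A B : {set 'I_r}, rho (A :|: B) + rho (A :&: B) <= rho A + rho B.

Lemma card_Xset : #|Xset rho| = kk rho.
Proof.
have -> : Xset rho = [set xmsg j | j : 'I_(kk rho)].
  apply/setP => -[j|y]; rewrite inE ?imset_f //.
  by apply/esym/negbTE/negP => /imsetP [].
by rewrite card_imset ?card_ord // => i j [].
Qed.

Lemma card_Msg : #|{: Msg rho}| = kk rho + #|Yset rho|.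
Proof. by rewrite -(cardsC (Xset rho)) card_Xset. Qed.

Lemma receiver_notin d (T : {set Msg rho}) : receiver d (inl T) -> d \notin T.
Proof.
case=> [[b [j [eta [_ [-> [eta_sub [->]]]]]]] | [R2 | [i [p [-> [->]]]]]]; last by rewrite inE.
- apply/bigcupP => -[l lb /(subsetP (eta_sub l lb).1) /(subsetP (zeta_sub_Yset rho l))].
  by rewrite !inE.
- case: R2 => c [j [p [eta [G2 [_ [_ [-> [eta_sub [G2_sub [_]]]]]]]]]].
  rewrite /HSum; case: eqP => // _ [->]; rewrite in_setU negb_or; apply/andP; split.
    apply/bigcupP => -[l lc /(subsetP (eta_sub l lc).1) /zetaP [q /ymsg_eq [ejl _]]].
    by move: lc; rewrite -ejl !inE eqxx.
  by apply/negP => /(subsetP G2_sub); rewrite !inE eqxx.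
Qed.

Lemma inR1_card d (T : {set Msg rho}) : inR1 d (inl T) -> #|T| = kk rho.
Proof.
case=> b [j [eta [bb [_ [eta_sub [->]]]]]].
rewrite card_bigcup_zeta => [|l lb]; last exact: (eta_sub l lb).1.
apply: etrans (basis_vec_sum rho0 rho_submod bb); rewrite -sum_support.
by apply: eq_bigr => l lb; exact: (eta_sub l lb).2.
Qed.

Lemma receiver23_Yset d H : inR2 d H \/ inR3 d H -> d \in Yset rho.
Proof. by case=> [[c [j [p [eta [G2 [_ [_ [-> _]]]]]]]] | [i [p [-> _]]]]; rewrite !inE. Qed.

(* An [R_1] Has-set holds [k] messages, none of them demanded from it; any
   other Has-set only serves demands for [Y]-messages. *)
Lemma mu_le_card_Yset : mu rho <= #|Yset rho|.
Proof.
apply/bigmax_leqP => H _.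
have [[d0 R1d0] | noR1] := classic (exists d, inR1 d H); last first.
  apply/subset_leq_card/subsetP => d; rewrite inE => /pbP [R1d | /receiver23_Yset //].
  by case: noR1; exists d.
have [T eHT] : exists T, H = inl T by case: R1d0 => b [j [eta [_ [_ [_ ->]]]]]; eexists.
subst H; apply: (@leq_trans #|~: T|).
  by apply/subset_leq_card/subsetP => d; rewrite !inE => /pbP /receiver_notin.
by have := cardsC T; rewrite card_Msg (inR1_card R1d0) => /addnI ->.
Qed.

End HasSetCounting.

Import GRing.Theory.
Local Open Scope ring_scope.

Lemma rank_diag_indicator (F : fieldType) m (C : {set 'I_m}) :
  \rank (diag_mx (\row_j ((j \in C) : nat)%:R) : 'M[F]_m) = #|C|.
Proof.
set D := diag_mx _.
have -> : (D :=: \sum_(i in C) <<delta_mx 0 i : 'rV[F]_m>>)%MS.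
  have rowD i : row i D = ((i \in C) : nat)%:R *: delta_mx 0 i by rewrite row_diag_mx mxE.
  apply/eqmxP/andP; split.
    apply/row_subP => i; rewrite rowD; case: (boolP (i \in C)) => iC.
      by rewrite scale1r (sumsmx_sup i) ?genmxE.
    by rewrite scale0r sub0mx.
  apply/sumsmx_subP => i iC; rewrite genmxE.
  by rewrite -[delta_mx _ _]scale1r -[1]/(true%:R) -iC -rowD row_sub.
have /mxdirectP -> /= := @mxdirect_delta F _ (mem C) m id (fun _ _ _ _ => id).
by rewrite (eq_bigr (fun _ => 1%N)) => [|i _]; rewrite ?sum1_card // mxrank_gen mxrank_delta.
Qed.

Lemma mxrank_mul_inj (F : fieldType) m p q (A : 'M[F]_(m, p)) (B : 'M[F]_(p, q)) :
  (forall v : 'rV_p, (v <= A)%MS -> v *m B = 0 -> v = 0) -> \rank (A *m B) = \rank A.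
Proof.
move=> injB; rewrite -[RHS](mxrank_mul_ker A B) -[LHS]addn0; congr (_ + _)%N.
apply/esym/eqP; rewrite mxrank_eq0; apply/eqP/row_matrixP => i; rewrite row0.
apply: injB; first exact: submx_trans (row_sub i _) (capmxSl _ _).
by apply/sub_kermxP; exact: submx_trans (row_sub i _) (capmxSr _ _).
Qed.

Section CoordinateMatrices.
Variables (r : nat) (rho : {set 'I_r} -> nat) (n : nat).

(* The messages, each in ['F_2^n], are flattened into a single row vector indexed by [coord]. *)
Definition coord := (Msg rho * 'I_n)%type.
Definition ncoord := #|{: coord}|.

Definition msgs_of_row (w : 'rV['F_2]_ncoord) : {ffun Msg rho -> 'rV['F_2]_n} :=
  [ffun m => \row_t w 0 (enum_rank ((m, t) : coord))].

Lemma msgs_of_rowE w m t : msgs_of_row w m 0 t = w 0 (enum_rank ((m, t) : coord)).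
Proof. by rewrite ffunE mxE. Qed.

Lemma msgs_of_row_eq0 w : (forall m, msgs_of_row w m = 0) -> w = 0.
Proof.
move=> w0; apply/rowP => j; have /rowP /(_ (enum_val j).2) := w0 (enum_val j).1.
by rewrite msgs_of_rowE !mxE -surjective_pairing enum_valK.
Qed.

Definition encoder_mx l (E : Msg rho -> 'M['F_2]_(n, l)) : 'M['F_2]_(ncoord, l) :=
  \matrix_(j, s) E (enum_val j).1 (enum_val j).2 s.

Lemma lin_encode_msgs_of_row l (E : Msg rho -> 'M['F_2]_(n, l)) w :
  lin_encode E (msgs_of_row w) = w *m encoder_mx E.
Proof.
apply/rowP => s; rewrite /lin_encode summxE !mxE.
rewrite (reindex (@enum_rank _)); last first.
  by exists enum_val => x _; [exact: enum_rankK | exact: enum_valK].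
rewrite (eq_bigr (fun m => \sum_t msgs_of_row w m 0 t * E m t s)) => [|m _]; last first.
  by rewrite !mxE.
by rewrite pair_big /=; apply: eq_bigr => -[m t] _; rewrite msgs_of_rowE mxE enum_rankK.
Qed.

Lemma lin_encode0 l (E : Msg rho -> 'M['F_2]_(n, l)) : lin_encode E 0 = 0.
Proof. by rewrite /lin_encode big1 // => m _; rewrite ffunE mul0mx. Qed.

Lemma info_vanish (H : HasSet rho) (z : {ffun Msg rho -> 'rV['F_2]_n}) :
  {in hasset_msgs H, forall m, z m = 0} -> info H z = info H 0.
Proof.
case: H => T /= z0; apply/ffunP => m; rewrite !ffunE; first by case: ifP => // /z0 ->.
by rewrite !big1 // => m' /z0; rewrite ffunE.
Qed.

Definition msgs_proj (Q : {set Msg rho}) : 'M['F_2]_ncoord :=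
  diag_mx (\row_j (((enum_val j).1 \in Q) : nat)%:R).

Lemma msgs_proj_eq0P w (Q : {set Msg rho}) :
  w *m msgs_proj Q = 0 <-> {in Q, forall m, msgs_of_row w m = 0}.
Proof.
split=> [wQ m mQ | w0].
  apply/rowP => t; have /rowP /(_ (enum_rank ((m, t) : coord))) := wQ.
  by rewrite mul_mx_diag !mxE msgs_of_rowE enum_rankK /= mQ mulr1.
apply/rowP => j; rewrite mul_mx_diag !mxE.
have [jQ | _] := boolP ((enum_val j).1 \in Q); last by rewrite mulr0.
have /rowP /(_ (enum_val j).2) := w0 _ jQ.
by rewrite msgs_of_rowE mxE -surjective_pairing enum_valK => ->; rewrite mul0r.
Qed.

Lemma msgs_projM (P Q : {set Msg rho}) :
  msgs_proj P *m msgs_proj Q = msgs_proj (P :&: Q).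
Proof.
apply/matrixP => i j; rewrite mul_mx_diag !mxE inE.
case: eqVneq => [<- | _]; last by rewrite !mulr0n mul0r.
by case: (_ \in P); case: (_ \in Q); rewrite /= ?mulr1 ?mulr0 ?mul0r.
Qed.

Lemma msgs_proj_subset (Q P : {set Msg rho}) :
  Q \subset P -> (msgs_proj Q <= msgs_proj P)%MS.
Proof. by move=> QP; rewrite -(setIidPl QP) -msgs_projM submxMl. Qed.

Lemma msgs_proj_bigcup (I : finType) (S : {set I}) (Q : I -> {set Msg rho}) :
  (msgs_proj (\bigcup_(i in S) Q i) :=: \sum_(i in S) msgs_proj (Q i))%MS.
Proof.
apply/eqmxP/andP; split; last first.
  by apply/sumsmx_subP => i iS; apply/msgs_proj_subset/bigcup_sup.
apply/row_subP => j; rewrite !row_diag_mx !mxE.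
have [/bigcupP [i iS jQ] | _] := boolP (_ \in _); last by rewrite scale0r sub0mx.
apply: (sumsmx_sup i) => //.
by have := row_sub j (msgs_proj (Q i)); rewrite row_diag_mx mxE jQ.
Qed.

Lemma rank_msgs_proj (Q : {set Msg rho}) : \rank (msgs_proj Q) = (#|Q| * n)%N.
Proof.
pose C := [set j : 'I_ncoord | (enum_val j).1 \in Q].
have -> : msgs_proj Q = diag_mx (\row_j ((j \in C) : nat)%:R).
  by congr diag_mx; apply/rowP => j; rewrite !mxE inE.
rewrite rank_diag_indicator.
have -> : C = [set enum_rank x | x in setX Q [set: 'I_n]].
  apply/setP => j; rewrite inE; apply/idP/imsetP => [jQ | [x xQ ->]].
    by exists (enum_val j); rewrite ?inE ?jQ ?enum_valK.
  by rewrite enum_rankK; move: xQ; rewrite inE => /andP [].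
by rewrite card_imset ?cardsX ?cardsT ?card_ord //; exact: enum_rank_inj.
Qed.

End CoordinateMatrices.

Section IndexCode.
Variables (r : nat) (rho : {set 'I_r} -> nat) (n l : nat) (E : Msg rho -> 'M['F_2]_(n, l)).
Hypothesis rho0 : rho set0 = 0%N.
Hypothesis rho_mono : forall A B : {set 'I_r}, A \subset B -> (rho A <= rho B)%N.
Hypothesis rho_submod :
  forall A B : {set 'I_r}, (rho (A :|: B) + rho (A :&: B) <= rho A + rho B)%N.
Hypothesis code : linear_index_code E.
Hypothesis code_short : (l <= #|Yset rho| * n)%N.

Implicit Types w : 'rV['F_2]_(ncoord rho n).

Local Notation F := (encoder_mx E).
Local Notation K := (kermx (encoder_mx E)).

(* [w] and [0] have the same encoding and, by [info_vanish], the same side information. *)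
Lemma kernel_vanish d H w : receiver d H -> w *m F = 0 ->
  {in hasset_msgs H, forall m, msgs_of_row w m = 0} -> msgs_of_row w d = 0.
Proof.
move=> dH wF /info_vanish wH; have [g gE] := code dH.
have := gE (msgs_of_row w); rewrite lin_encode_msgs_of_row wF wH => <-.
by have := gE 0; rewrite lin_encode0 ffunE.
Qed.

Lemma kernel_vanish_Xset w : w *m F = 0 -> w *m msgs_proj n (Xset rho) = 0 -> w = 0.
Proof.
move=> wF /msgs_proj_eq0P wX; apply: msgs_of_row_eq0 => m.
have [/wX // | ] := boolP (m \in Xset rho); case: m => [j | [i p]]; rewrite inE // => _.
exact: kernel_vanish (or_intror (or_intror (inR3_Xset p))) wF wX.
Qed.

Lemma kernel_vanish_basis b w : basis_vec rho b -> w *m F = 0 ->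
  w *m msgs_proj n (ymsgs rho b) = 0 -> w *m msgs_proj n (Xset rho) = 0.
Proof.
move=> bb wF /msgs_proj_eq0P wb; apply/msgs_proj_eq0P => -[j _ | y]; last by rewrite inE.
exact: kernel_vanish (or_introl (inR1_ymsgs j bb)) wF wb.
Qed.

Lemma kernel_vanish_zetas (S : {set 'I_r}) u w :
  inD rho u -> (forall i, i \notin S -> u i = 0%N) -> (\sum_(i in S) u i = rho S)%N ->
  w *m F = 0 -> w *m msgs_proj n (ymsgs rho u) = 0 -> w *m msgs_proj n (zetas rho S) = 0.
Proof.
move=> Du uS tS wF /msgs_proj_eq0P wu; apply/msgs_proj_eq0P => _ /bigcupP [i iS /zetaP [p ->]].
have [pu | up] := ltnP p (u i); first by apply: wu; rewrite mem_ymsgs.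
have [c [Mc ci ck]] := exists_min_excluded_vincr Du iS tS (leq_ltn_trans up (ltn_ord p)).
apply: kernel_vanish (or_intror (or_introl (inR2_zeta_prefix Mc ci up))) wF _ => m.
rewrite hasset_msgs_HSum => /setUP [/bigcupP [k /setD1P [ki _]] | ] mu; apply: wu.
  exact: subsetP (zeta_prefix_ymsgs rho (ck k ki)) _ mu.
exact: subsetP (zeta_prefix_ymsgs rho (leqnn _)) _ mu.
Qed.

Lemma rank_kernel_ge : (kk rho * n <= \rank K)%N.
Proof.
have ncoordE : ncoord rho n = ((kk rho + #|Yset rho|) * n)%N.
  by rewrite /ncoord card_prod card_Msg card_ord.
by rewrite mxrank_ker; have := rank_leq_col F; move: code_short; lia.
Qed.

(* Injective by the two vanishing lemmas, onto by counting. *)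
Lemma kernel_proj_basis b : basis_vec rho b ->
  (K *m msgs_proj n (ymsgs rho b) :=: msgs_proj n (ymsgs rho b))%MS.
Proof.
move=> bb; apply/eqmxP; rewrite -(geq_leqif (mxrank_leqif_eq (submxMl _ _))).
have -> : \rank (K *m msgs_proj n (ymsgs rho b)) = \rank K.
  apply: mxrank_mul_inj => v /sub_kermxP vF vb.
  exact: kernel_vanish_Xset vF (kernel_vanish_basis bb vF vb).
rewrite rank_msgs_proj card_ymsgs => [|i]; last exact/inD_le1/bb.1.
by rewrite (basis_vec_sum rho0 rho_submod bb) rank_kernel_ge.
Qed.

Lemma rank_kernel_proj_zetas (S : {set 'I_r}) :
  \rank (K *m msgs_proj n (zetas rho S)) = (rho S * n)%N.
Proof.
have [u [Du uS tS]] := exists_tight_vec rho0 rho_mono rho_submod S.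
have [b [Db ub max_b]] := @exists_maximal _ rho (inD rho) u Du (fun _ Dv => Dv).
set Y := msgs_proj n (zetas rho S); set U := msgs_proj n (ymsgs rho u).
have YU : Y *m U = U by rewrite msgs_projM (setIidPr (ymsgs_zetas rho uS)).
have bU : msgs_proj n (ymsgs rho b) *m U = U.
  by rewrite msgs_projM (setIidPr (ymsgs_subset rho ub)).
have <- : \rank (K *m Y *m U) = \rank (K *m Y).
  apply: mxrank_mul_inj => _ /submxP [x ->] vU; rewrite mulmxA.
  apply: kernel_vanish_zetas Du uS tS _ _; first by apply/sub_kermxP; exact: submxMl.
  by rewrite -mulmxA -(mulmxA K) YU in vU; rewrite -mulmxA.
rewrite -mulmxA YU -bU mulmxA (eqmxMr _ (kernel_proj_basis (conj Db max_b))) bU.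
rewrite rank_msgs_proj card_ymsgs => [|i]; last exact: inD_le1.
by rewrite -tS [in RHS]big_mkcond; congr (_ * _)%N; apply: eq_bigr => i _; case: ifPn => // /uS.
Qed.

Lemma representable_of_code : representable_F2 rho n.
Proof.
exists (ncoord rho n), (fun i => msgs_proj n (zeta rho i) *m K^T) => S.
rewrite -sumsmxMr -(eqmxMr _ (msgs_proj_bigcup n S (zeta rho))).
rewrite -[msgs_proj n _]tr_diag_mx -trmx_mul.
by rewrite mxrank_tr rank_kernel_proj_zetas mulnC.
Qed.

End IndexCode.

Local Close Scope ring_scope.

Theorem theorem2 (r : nat) (rho : {set 'I_r} -> nat) (n : nat) :
  rho set0 = 0 ->
  (forall A B : {set 'I_r}, A \subset B -> rho A <= rho B) ->
  (forall A B : {set 'I_r}, rho (A :|: B) + rho (A :&: B) <= rho A + rho B) ->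
  0 < n ->
  perfect_linear_solution rho n ->
  representable_F2 rho n.
Proof.
move=> rho0 rho_mono rho_submod _ [l [E [code l_mu]]].
apply: (representable_of_code rho0 rho_mono rho_submod code).
by rewrite l_mu leq_mul // mu_le_card_Yset.
Qed.
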